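(* Let $(M,A)$ be a $d$-dimensional BUT-manifold. Let $\{B_i,B_{-i}\}$, $i=1,\ldots,d+1$, be a family of closed subsets of $M$ with $B_{-i}=A(B_i)$ and $B_i\cap B_{-i}=\emptyset$ for all $i$. If this family covers $M$, then for every set of indices $\{k_1,\ldots,k_{d+1}\}\subset\{\pm1,\pm2,\ldots,\pm(d+1)\}$ with $|k_i|=i$ for all $i$, the intersection $\bigcap_{i=1}^{d+1}B_{k_i}$ is nonempty.
   Context: A BUT (Borsuk–Ulam type) manifold is a pair $(M,A)$ where $M$ is a connected compact piecewise-linear $d$-dimensional manifold without boundary and $A:M\to M$ is a free simplicial involution ($A(A(x))=x$, $A(x)\neq x$), such that for every continuous $g:M\to\mathbb{R}^d$ there is $x\in M$ with $g(A(x))=g(x)$. *)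

From HB Require Import structures.
From mathcomp Require Import all_boot all_order all_algebra.
From mathcomp Require Import all_classical all_reals all_analysis.
Set Implicit Arguments. Unset Strict Implicit. Unset Printing Implicit Defensive.
Import Order.TTheory GRing.Theory Num.Theory.
Import numFieldNormedType.Exports.
Local Open Scope classical_set_scope.
Local Open Scope ring_scope.

(* Piecewise-linear (PL) setting: polyhedra in R^N = 'rV[R]_N, triangulated
   by finite geometric simplicial complexes.  A simplex is given by the list
   of its vertices. *)

Section PL.
Variable R : realType.

(* convex hull of a list of points (empty list -> empty set) *)
Definition hull (N : nat) (s : seq 'rV[R]_N) : set 'rV[R]_N :=
  [set x | exists l : 'rV[R]_N -> R,
     [/\ forall v, v \in s -> 0 <= l v,
         \sum_(v <- s) l v = 1 &
         x = \sum_(v <- s) l v *: v]].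

Definition affine_indep (N : nat) (s : seq 'rV[R]_N) : bool :=
  match s with
  | [::] => true
  | v0 :: vs => row_free (\matrix_(i < size vs) (nth 0 vs i - v0))
  end.

Definition simplicial_complex (N : nat) (K : seq (seq 'rV[R]_N)) : Prop :=
  [/\ forall s, s \in K -> s != [::] /\ affine_indep s,
      forall s t, s \in K -> t != [::] -> {subset t <= s} ->
        exists2 t', t' \in K & t' =i t &
      (* two simplices meet in a common face (possibly empty) *)
      forall s t, s \in K -> t \in K ->
        hull s `&` hull t = hull [seq v <- s | v \in t]].

Definition polyhedron (N : nat) (K : seq (seq 'rV[R]_N)) : set 'rV[R]_N :=
  [set x | exists2 s, s \in K & hull s x].

Definition triangulates (N : nat) (K : seq (seq 'rV[R]_N)) (P : set 'rV[R]_N) :=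
  simplicial_complex K /\ polyhedron K = P.

Definition affine_on (N m : nat) (s : seq 'rV[R]_N) (f : 'rV[R]_N -> 'rV[R]_m) :=
  forall l : 'rV[R]_N -> R,
    (forall v, v \in s -> 0 <= l v) -> \sum_(v <- s) l v = 1 ->
    f (\sum_(v <- s) l v *: v) = \sum_(v <- s) l v *: f v.

Definition PL_on (N m : nat) (P : set 'rV[R]_N) (f : 'rV[R]_N -> 'rV[R]_m) :=
  exists K, triangulates K P /\ forall s, s \in K -> affine_on s f.

Definition PL_homeo (N m : nat) (P : set 'rV[R]_N) (Q : set 'rV[R]_m)
    (f : 'rV[R]_N -> 'rV[R]_m) :=
  exists g : 'rV[R]_m -> 'rV[R]_N,
    [/\ PL_on P f /\ PL_on Q g, f @` P `<=` Q, g @` Q `<=` P,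
        (forall x, P x -> g (f x) = x) & (forall y, Q y -> f (g y) = y)].

Definition std_simplex (d : nat) : set 'rV[R]_d :=
  hull (0 :: [seq delta_mx 0 i | i <- enum 'I_d]).

(* M is a compact PL d-manifold without boundary: M is a polyhedron, and
   every point x of M has a (polyhedral) neighbourhood in M which is
   PL homeomorphic to a d-ball (the standard d-simplex) with x sent to an
   interior point of the ball. *)
Definition PL_manifold (N d : nat) (M : set 'rV[R]_N) : Prop :=
  (exists K, triangulates K M) /\
  forall x, M x ->
    exists Q : set 'rV[R]_N, exists h : 'rV[R]_N -> 'rV[R]_d,
      [/\ Q `<=` M,
          (exists U : set 'rV[R]_N, [/\ open U, U x & U `&` M `<=` Q]),
          PL_homeo Q (@std_simplex d) h &
          interior (@std_simplex d) (h x)].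

Definition simplicial_map (N : nat) (M : set 'rV[R]_N) (A : 'rV[R]_N -> 'rV[R]_N) :=
  exists K, [/\ triangulates K M,
     forall s, s \in K -> affine_on s A &
     forall s, s \in K -> exists2 t, t \in K & t =i map A s].

Definition free_simplicial_involution (N : nat) (M : set 'rV[R]_N)
    (A : 'rV[R]_N -> 'rV[R]_N) :=
  [/\ simplicial_map M A,
      forall x, M x -> M (A x),
      forall x, M x -> A (A x) = x &
      forall x, M x -> A x != x].

Definition BUT_manifold (N d : nat) (M : set 'rV[R]_N) (A : 'rV[R]_N -> 'rV[R]_N) :=
  [/\ PL_manifold d M, connected M, free_simplicial_involution M A &
      forall g : 'rV[R]_N -> 'rV[R]_d, {within M, continuous g} ->
        exists2 x, M x & g (A x) = g x].

End PL.

From HB Require Import structures.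
From mathcomp Require Import all_boot all_order all_algebra.
From mathcomp Require Import all_classical all_reals all_analysis.
From mathcomp Require Import ring lra.
Import Order.TTheory GRing.Theory Num.Theory.
Import numFieldNormedType.Exports.
Local Open Scope classical_set_scope.
Local Open Scope ring_scope.
Set Implicit Arguments. Unset Strict Implicit. Unset Printing Implicit Defensive.

(* Suppose the sets C_i := B_(k_i) have no common point, and put D_i := A(C_i).
   Distance functions give continuous F_i : M -> R with F_i = -1 on D_i and
   F_i = 1 exactly on C_i.  In the coordinates z |-> (sum_j z_j, z_i - z_0) the
   point F(x) never lies on the closed ray of nonnegative multiples of e_0: there
   all F_j agree with a nonnegative value, and since x lies in some C_j or D_j
   that value is 1, i.e. x lies in every C_i.  Stereographic projection from
   that ray turns F into a map M -> R^d, so the Borsuk-Ulam property yields x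
   with F(A x) = c F(x) for some c > 0; yet x lies in some C_j or D_j, where
   F_j(x) and F_j(A x) are 1 and -1 in some order. *)

Section Continuity.
Variables (R : realType) (T : topologicalType).

Lemma continuous_sum (V : normedModType R) (I : Type) (r : seq I) (f : I -> T -> V) x :
  (forall i, f i @ x --> f i x) ->
  (fun y => \sum_(i <- r) f i y) @ x --> \sum_(i <- r) f i x.
Proof. by move=> fc; apply: (cvg_big add_continuous) => // i _; exact: fc. Qed.

Lemma continuous_row d (f : 'I_d -> T -> R) x :
  (forall i, f i @ x --> f i x) ->
  (fun y => \row_i f i y : 'rV[R]_d) @ x --> \row_i f i x.
Proof.
move=> fc; have rowE y : \row_i f i y = \sum_(i < d) f i y *: (delta_mx 0 i : 'rV[R]_d).
  by rewrite {1}(row_sum_delta (\row_i f i y)); apply: eq_bigr => i _; rewrite mxE.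
rewrite (funext rowE) rowE; apply: continuous_sum => i; exact: cvgZr_tmp.
Qed.

End Continuity.

Section DistanceToSet.
Variables (R : realType) (V : normedModType R) (C : set V).

Definition dist_set (x : V) : R := inf [set `|x - y| | y in C].

Hypothesis C0 : C !=set0.

Let dist_set_has_inf x : has_inf [set `|x - y| | y in C].
Proof.
have [c Cc] := C0; split; first by exists `|x - c|, c.
by exists 0 => _ [y _ <-].
Qed.

Lemma dist_set_ge0 x : 0 <= dist_set x.
Proof.
by apply: lb_le_inf => [|_ [y _ <-]] //; case: (dist_set_has_inf x).
Qed.

Lemma dist_set_le x y : C y -> dist_set x <= `|x - y|.
Proof. by move=> Cy; apply: ge_inf; [case: (dist_set_has_inf x) | exists y]. Qed.

Lemma dist_set_lipschitz x z : dist_set x <= `|x - z| + dist_set z.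
Proof.
rewrite -lerBlDl; apply: lb_le_inf => [|_ [y Cy <-]]; first by case: (dist_set_has_inf z).
rewrite lerBlDl (le_trans (dist_set_le x Cy)) //.
by rewrite (le_trans _ (ler_normD _ _)) // addrA subrK.
Qed.

Lemma dist_set_continuous : continuous dist_set.
Proof.
move=> x; apply/cvgrPdist_lt => e e0; near=> z.
have xz : `|x - z| < e by near: z; exact: (@cvgr_dist_lt _ _ _ (nbhs x) _ id x cvg_id).
have := dist_set_lipschitz z x; rewrite distrC => lip_zx.
have lip_xz := dist_set_lipschitz x z.
by rewrite ltr_norml; apply/andP; split; lra.
Unshelve. all: by end_near.
Qed.

Lemma dist_set_eq0 x : closed C -> dist_set x = 0 <-> C x.
Proof.
move=> clC; split=> [dx0 | Cx]; last first.
  by apply/eqP; rewrite eq_le dist_set_ge0 andbT (le_trans (dist_set_le x Cx)) // subrr normr0.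
apply: clC => U /nbhs_ballP[e /= e0 eU].
have [_ [y Cy <-]] := inf_adherent e0 (dist_set_has_inf x).
rewrite -/(dist_set x) dx0 add0r => xy.
by exists y; split => //; apply: eU; rewrite -ball_normE.
Qed.

End DistanceToSet.

Section Separation.
Variables (R : realType) (V : normedModType R).

Lemma closed_zero_set (C : set V) : closed C ->
  exists u : V -> R, [/\ continuous u, forall x, 0 <= u x & forall x, u x = 0 <-> C x].
Proof.
move=> clC; have [->|/set0P C0] := eqVneq C set0.
  exists (fun=> 1); split=> [x|x|x]; first exact: cvg_cst.
    exact: ler01.
  by split=> // /eqP; rewrite oner_eq0.
exists (dist_set C); split=> [|x|x].
- exact: dist_set_continuous.
- exact: dist_set_ge0.
- exact: dist_set_eq0.
Qed.

Lemma separating_function (C D : set V) :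
  closed C -> closed D -> C `&` D = set0 ->
  exists F : V -> R, [/\ continuous F,
    forall x, C x -> F x = 1, forall x, D x -> F x = -1 &
    forall x, F x = 1 -> C x].
Proof.
move=> clC clD CD0.
have [u [uc u0 uC]] := closed_zero_set clC.
have [w [wc w0 wD]] := closed_zero_set clD.
have uw_gt0 x : 0 < u x + w x.
  rewrite lt_def addr_ge0 // andbT paddr_eq0 //; apply/negP => /andP[/eqP/uC Cx /eqP/wD Dx].
  by have : (C `&` D) x by []; rewrite CD0.
exists (fun x => (w x - u x) / (u x + w x)); split=> [x|x Cx|x Dx|x].
- apply: cvgM; first exact: cvgB (wc x) (uc x).
  by apply: cvgV; [exact: lt0r_neq0 | exact: cvgD (uc x) (wc x)].
- have ux : u x = 0 by exact/uC.
  by move: (uw_gt0 x); rewrite ux subr0 add0r => wx; rewrite divff // lt0r_neq0.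
- have wx : w x = 0 by exact/wD.
  by move: (uw_gt0 x); rewrite wx sub0r addr0 => ux; rewrite mulNr divff // lt0r_neq0.
- move=> /(congr1 (fun t => t * (u x + w x))); rewrite mul1r divfK ?lt0r_neq0 // => e.
  by apply/uC; have := u0 x; lra.
Qed.

End Separation.

Section Stereographic.
Variables (R : realType) (d : nat).
Implicit Types z w : 'I_d.+1 -> R.

(* [stereo_den z] vanishes exactly on the ray of nonnegative multiples of e_0,
   and [stereo] is the stereographic projection from e_0 extended to be
   invariant under positive scaling. *)
Definition stereo_den z := Num.sqrt (\sum_i z i ^+ 2) - z ord0.

Definition stereo z : 'rV[R]_d := \row_i (z (lift ord0 i) / stereo_den z).

Let sqr_sqrt_sum_sqr z :
  Num.sqrt (\sum_i z i ^+ 2) ^+ 2 = z ord0 ^+ 2 + \sum_(i < d) z (lift ord0 i) ^+ 2.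
Proof.
rewrite sqr_sqrtr; first exact: big_ord_recl.
by apply: sumr_ge0 => i _; exact: sqr_ge0.
Qed.

Lemma stereo_den_ge0 z : 0 <= stereo_den z.
Proof.
have lift_ge0 : 0 <= \sum_(i < d) z (lift ord0 i) ^+ 2.
  by apply: sumr_ge0 => i _; exact: sqr_ge0.
rewrite subr_ge0 (le_trans (ler_norm _)) // -sqrtr_sqr ler_sqrt big_ord_recl.
  by rewrite lerDl.
by rewrite addr_ge0 ?sqr_ge0.
Qed.

Lemma stereo_den_eq0 z : stereo_den z = 0 ->
  0 <= z ord0 /\ forall i : 'I_d, z (lift ord0 i) = 0.
Proof.
move=> /eqP; rewrite subr_eq0 => /eqP z0E; split=> [|i]; first by rewrite -z0E sqrtr_ge0.
have /eqP : \sum_(j < d) z (lift ord0 j) ^+ 2 = 0.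
  by apply: (addrI (z ord0 ^+ 2)); rewrite -sqr_sqrt_sum_sqr z0E addr0.
rewrite psumr_eq0 => [/allP/(_ i (mem_index_enum _))|j _]; last exact: sqr_ge0.
by rewrite sqrf_eq0 => /eqP.
Qed.

Lemma sum_sqr_stereo z : stereo_den z != 0 ->
  \sum_(i < d) (stereo z 0 i) ^+ 2 = 1 + 2 * z ord0 / stereo_den z.
Proof.
move=> D0; under eq_bigr do rewrite mxE expr_div_n.
rewrite -mulr_suml.
have -> : \sum_(i < d) z (lift ord0 i) ^+ 2 =
    Num.sqrt (\sum_i z i ^+ 2) ^+ 2 - z ord0 ^+ 2.
  by rewrite sqr_sqrt_sum_sqr addrC addKr.
move: D0; rewrite /stereo_den; set r := Num.sqrt _ => D0.
by field.
Qed.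

Lemma stereo_inj z w : 0 < stereo_den z -> 0 < stereo_den w ->
  stereo z = stereo w -> forall i, z i = stereo_den z / stereo_den w * w i.
Proof.
move=> Dz Dw zw.
have ratio_eq i : z i / stereo_den z = w i / stereo_den w.
  case: (unliftP ord0 i) => [j ->|->].
    by have := congr1 (fun m : 'rV[R]_d => m 0 j) zw; rewrite !mxE.
  (* the squared norm of the projection recovers [z ord0 / stereo_den z] *)
  have := congr1 (fun m : 'rV[R]_d => \sum_(i < d) (m 0 i) ^+ 2) zw.
  rewrite /= !sum_sqr_stereo ?lt0r_neq0 // => /addrI.
  by rewrite -!mulrA; apply: mulfI; rewrite pnatr_eq0.
move=> i; rewrite -[LHS](divfK (lt0r_neq0 Dz)) ratio_eq.
by rewrite mulrC mulrA [RHS]mulrAC.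
Qed.

Lemma stereo_den_continuous (T : topologicalType) (G : T -> 'I_d.+1 -> R) :
  (forall i, continuous (G^~ i)) -> continuous (fun x => stereo_den (G x)).
Proof.
move=> Gc x; apply: cvgB; last exact: Gc.
have sum_cvg : (fun y => \sum_i G y i ^+ 2) @ x --> \sum_i G x i ^+ 2.
  by apply: continuous_sum => i; under eq_fun do rewrite expr2; rewrite expr2; exact: cvgM (Gc i x) (Gc i x).
by apply: (cvg_comp _ _ sum_cvg); exact: sqrt_continuous.
Qed.

Lemma stereo_continuous (T : topologicalType) (G : T -> 'I_d.+1 -> R) x :
  (forall i, continuous (G^~ i)) -> 0 < stereo_den (G x) ->
  {for x, continuous (fun y => stereo (G y))}.
Proof.
move=> Gc Dx; apply: continuous_row => i; apply: cvgM; first exact: Gc.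
by apply: cvgV; [exact: lt0r_neq0 | exact: stereo_den_continuous].
Qed.

End Stereographic.

Section SumDiff.
Variables (R : realType) (d : nat).
Implicit Types z w : 'I_d.+1 -> R.

Definition sum_diff z (i : 'I_d.+1) : R :=
  if i == ord0 then \sum_j z j else z i - z ord0.

Lemma sum_diff0 z : sum_diff z ord0 = \sum_j z j.
Proof. by rewrite /sum_diff eqxx. Qed.

Lemma sum_diff_lift z (j : 'I_d) : sum_diff z (lift ord0 j) = z (lift ord0 j) - z ord0.
Proof. by rewrite /sum_diff eq_sym (negbTE (neq_lift _ _)). Qed.

Lemma sum_diff_scale_inj z w c :
  (forall i, sum_diff z i = c * sum_diff w i) -> forall j, z j = c * w j.
Proof.
move=> zw; pose delta := z ord0 - c * w ord0.
have z_delta j : z j - c * w j = delta.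
  case: (unliftP ord0 j) => [j' ->|-> //]; have := zw (lift ord0 j').
  rewrite !sum_diff_lift => e.
  by rewrite /delta -[z (lift _ _)](subrK (z ord0)) e; ring.
have : delta *+ d.+1 = 0.
  rewrite -[d.+1]card_ord -sumr_const -(eq_bigr _ (fun j _ => z_delta j)).
  by rewrite sumrB -mulr_sumr; have := zw ord0; rewrite !sum_diff0 => ->; ring.
move/eqP; rewrite mulrn_eq0 /= => /eqP delta0 j.
by apply/eqP; rewrite -subr_eq0 z_delta delta0.
Qed.

Lemma stereo_den_sum_diff_eq0 z : stereo_den (sum_diff z) = 0 ->
  0 <= z ord0 /\ forall j, z j = z ord0.
Proof.
move=> /stereo_den_eq0[sum_ge0 lift0].
have z_eq j : z j = z ord0.
  case: (unliftP ord0 j) => [j' ->|-> //]; apply/eqP; rewrite -subr_eq0.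
  by have := lift0 j'; rewrite sum_diff_lift => ->.
split=> //; move: sum_ge0; rewrite sum_diff0 (eq_bigr _ (fun j _ => z_eq j)).
by rewrite sumr_const card_ord -mulr_natr pmulr_lge0 ?ltr0n.
Qed.

Lemma sum_diff_continuous (T : topologicalType) (F : 'I_d.+1 -> T -> R) :
  (forall j, continuous (F j)) -> forall i, continuous (fun x => sum_diff (F^~ x) i).
Proof.
move=> Fc i x; rewrite /sum_diff; case: (i == ord0); last exact: cvgB (Fc i x) (Fc ord0 x).
by apply: continuous_sum => j; exact: Fc.
Qed.

End SumDiff.

Section BorsukUlamCovering.
Variables (R : realType) (N d : nat) (M : set 'rV[R]_N) (A : 'rV[R]_N -> 'rV[R]_N).
Hypothesis MA : forall x, M x -> M (A x).
Hypothesis borsuk_ulam : forall g : 'rV[R]_N -> 'rV[R]_d,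
  {within M, continuous g} -> exists2 x, M x & g (A x) = g x.

Lemma borsuk_ulam_positive_multiple (G : 'rV[R]_N -> 'I_d.+1 -> R) :
  (forall i, continuous (G^~ i)) -> (forall x, M x -> 0 < stereo_den (G x)) ->
  exists2 x, M x & exists2 c, 0 < c & forall i, G (A x) i = c * G x i.
Proof.
move=> Gc Gpos.
have stereo_cont : {within M, continuous (fun x => stereo (G x))}.
  by apply: continuous_in_subspaceT => x /set_mem Mx; exact: stereo_continuous Gc (Gpos x Mx).
have [x Mx Gx] := borsuk_ulam stereo_cont.
exists x => //; exists (stereo_den (G (A x)) / stereo_den (G x)).
  by rewrite divr_gt0 // Gpos //; exact: MA.
by apply: stereo_inj => //; apply: Gpos => //; exact: MA.
Qed.

Variables C D : 'I_d.+1 -> set 'rV[R]_N.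
Hypotheses (C_closed : forall i, closed (C i)) (D_closed : forall i, closed (D i)).
Hypothesis CD0 : forall i, C i `&` D i = set0.
Hypotheses (AC : forall i x, C i x -> D i (A x)) (AD : forall i x, D i x -> C i (A x)).
Hypothesis CD_cover : forall x, M x -> exists i, C i x \/ D i x.

Lemma borsuk_ulam_cover_meet : exists x, forall i, C i x.
Proof.
have [//|no_meet] := pselect (exists x, forall i, C i x); exfalso.
have [F /all_and4[Fc FC FD FC1]] :=
  choice (fun i : 'I_d.+1 => separating_function (@C_closed i) (@D_closed i) (CD0 i)).
pose G x := sum_diff (F^~ x).
have Gpos x : M x -> 0 < stereo_den (G x).
  move=> Mx; rewrite lt_def stereo_den_ge0 andbT.
  apply/eqP => /stereo_den_sum_diff_eq0[F0_ge0 F_eq].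
  have [j [Cjx|Djx]] := CD_cover Mx.
  - by apply: no_meet; exists x => i; apply: FC1; rewrite F_eq -(F_eq j) FC.
  - by move: F0_ge0; rewrite -(F_eq j) FD //; lra.
have [x Mx [c c_gt0 /sum_diff_scale_inj FA]] :=
  borsuk_ulam_positive_multiple (sum_diff_continuous Fc) Gpos.
have [j [Cjx|Djx]] := CD_cover Mx.
- by move: (FA j); rewrite (FC j x Cjx) (FD j (A x) (AC Cjx)); lra.
- by move: (FA j); rewrite (FD j x Djx) (FC j (A x) (AD Djx)); lra.
Qed.

End BorsukUlamCovering.

Unset Implicit Arguments.

Theorem theorem4p1 (R : realType) (N d : nat) (M : set 'rV[R]_N)
    (A : 'rV[R]_N -> 'rV[R]_N) (B : 'I_d.+1 -> bool -> set 'rV[R]_N) :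
  BUT_manifold d M A ->
  (forall i b, B i b `<=` M /\ closed (B i b)) ->
  (forall i, B i false = A @` B i true) ->
  (forall i, B i true `&` B i false = set0) ->
  M `<=` \bigcup_(i in [set: 'I_d.+1]) (B i true `|` B i false) ->
  forall k : 'I_d.+1 -> bool, exists x, forall i, B i (k i) x.
Proof.
move=> [_ _ [_ MA AA _] borsuk_ulam] B_sub_closed B_false B_disj B_cover k.
have AB i b x : B i b x -> B i (~~ b) (A x).
  case: b => /= Bx; first by rewrite B_false; exists x.
  by move: Bx; rewrite B_false => -[y By <-]; rewrite AA //; exact: (B_sub_closed i true).1.
apply: (@borsuk_ulam_cover_meet R N d M A MA borsuk_ulam
  (fun i => B i (k i)) (fun i => B i (~~ k i))) => [i|i|i|i x|i x|x Mx] /=.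
- exact: (B_sub_closed i (k i)).2.
- exact: (B_sub_closed i (~~ k i)).2.
- by case: (k i); rewrite // setIC.
- exact: AB.
- by move=> /AB; rewrite negbK.
- have [i _ Bx] := B_cover x Mx; exists i.
  by case: (k i); case: Bx; auto.
Qed.
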